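(* Let $k\neq r$ be jobs with $t_r\le t_k$, and suppose there is a job $j$ such that both $(j,k)$ and $(j,r)$ are red pairs. Let $N^-(x)=\{i:(i,x)\text{ is a red pair}\}$. Then: (a) for every $j'\in N^-(k)$ with $m_{j'}\le m_j$, we have $j'\in N^-(r)$ (so $N^-(k)\cap N^-(r)$ is an initial segment of $N^-(k)$ ordered by $m$); (b) there is no job $j''\in N^-(r)$ with $m_{j''}>m_{j'}$ for all $j'\in N^-(k)$.
   Context: Jobs $j$ have test time $t_j\ge0$ and processing time $p_j\ge0$; $m_j=\max\{t_j,p_j\}$, $\sigma_j=t_j+p_j$. Standing assumption (general position): no two of the $3n$ numbers $t_j,p_j,\sigma_j$ ($j=1,\dots,n$) are equal. Fix constants $\mu>1$ and $0<\nu<1$ with $\mu\nu>1$ and $1+\frac1\mu\le\nu+\nu^2$. A job $j$ is imbalanced if $m_j\ge\mu\min\{t_j,p_j\}$. For distinct jobs $j,k$, the ordered pair $(j,k)$ is a red pair if $j$ is imbalanced, $m_j\ge t_k\ge\nu m_j$, and $p_k\ge\nu t_k$. *)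

From mathcomp Require Import all_boot all_order all_algebra.
Set Implicit Arguments. Unset Strict Implicit. Unset Printing Implicit Defensive.
Import Order.TTheory GRing.Theory Num.Theory.
Local Open Scope ring_scope.

Section Jobs.
Variables (R : realFieldType) (n : nat) (t p : 'I_n -> R).

Definition mj (j : 'I_n) : R := Num.max (t j) (p j).
Definition sigmaj (j : 'I_n) : R := t j + p j.

Definition gp_val (x : 'I_n * 'I_3) : R :=
  match val x.2 with
  | 0%N => t x.1
  | 1%N => p x.1
  | _ => sigmaj x.1
  end.

Definition general_position : Prop := injective gp_val.

Definition imbalanced (mu : R) (j : 'I_n) : Prop :=
  mj j >= mu * Num.min (t j) (p j).

Definition red_pair (mu nu : R) (j k : 'I_n) : Prop :=
  j <> k /\ imbalanced mu j /\ mj j >= t k /\ t k >= nu * mj j /\ p k >= nu * t k.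

End Jobs.

(* A red pair (j, x) is determined by inequalities that involve j only through
   [imbalanced j] and [mj j]; the side condition j <> x is automatic, because an
   imbalanced job x cannot satisfy nu m_x <= t_x and nu t_x <= p_x: these give
   nu m_x <= min(t_x, p_x), so mu nu m_x <= m_x and m_x = 0, i.e. t_x = p_x = 0,
   which general position forbids.  With this, (a) and (b) are just transitivity
   of the window inequalities along t_r <= t_k and the order of the m's. *)
From mathcomp Require Import all_boot all_order all_algebra.
From mathcomp Require Import lra.
Import Order.TTheory GRing.Theory Num.Theory.
Local Open Scope ring_scope.

Lemma general_position_t_neq_p {R : realFieldType} {n : nat} {t p : 'I_n -> R}
    (i : 'I_n) :
  general_position t p -> t i <> p i.
Proof.
move=> hgp tp.
have := hgp (i, Ordinal (isT : (0 < 3)%N)) (i, Ordinal (isT : (1 < 3)%N)).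
by rewrite /gp_val /= tp => /(_ erefl) [].
Qed.

Section RedPairs.
Context {R : realFieldType} {n : nat} {t p : 'I_n -> R} {mu nu : R}.
Hypotheses (ht : forall i, 0 <= t i) (hp : forall i, 0 <= p i).
Hypothesis hgp : general_position t p.
Hypotheses (hmu : 0 <= mu) (hnu0 : 0 <= nu) (hmunu : 1 < mu * nu).

Lemma window_not_imbalanced (x : 'I_n) :
  nu * mj t p x <= t x -> nu * t x <= p x -> ~ imbalanced t p mu x.
Proof.
rewrite /imbalanced /mj => htx hpx him.
have shrink0 y : 0 <= y -> mu * (nu * y) <= y -> y = 0.
  move=> y0 hy; apply/eqP; rewrite eq_le y0 andbT.
  rewrite -(pmulr_rle0 y (_ : 0 < mu * nu - 1)) ?subr_gt0 //.
  by rewrite mulrBl mul1r subr_le0 -mulrA.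
apply: (general_position_t_neq_p x hgp).
have [tx0 px0] := (ht x, hp x).
case: (leP (t x) (p x)) => [htp | /ltW htp].
- rewrite (max_idPr htp) (min_idPl htp) in htx him.
  have /shrink0 p0 : mu * (nu * p x) <= p x.
    by apply: le_trans him; rewrite ler_wpM2l.
  by rewrite p0 in htp *; lra.
- rewrite (max_idPl htp) (min_idPr htp) in htx him.
  have /shrink0 t0 : mu * (nu * t x) <= t x.
    by apply: le_trans him; rewrite ler_wpM2l.
  by rewrite t0 in htp *; lra.
Qed.

Lemma red_pair_of_window (j x : 'I_n) :
  imbalanced t p mu j -> t x <= mj t p j -> nu * mj t p j <= t x ->
  nu * t x <= p x -> red_pair t p mu nu j x.
Proof.
move=> him htx hmt hpx; do !split=> //.
move=> ejx; subst x.
exact: window_not_imbalanced hmt hpx him.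
Qed.

Lemma red_pair_lower_target {j j' k r : 'I_n} :
  t r <= t k -> red_pair t p mu nu j' k -> red_pair t p mu nu j r ->
  mj t p j' <= mj t p j -> red_pair t p mu nu j' r.
Proof.
move=> htrk [_ [him' [htk' _]]] [_ [_ [_ [hmj hpr]]]] hle.
apply: red_pair_of_window => //; first exact: le_trans htrk htk'.
by apply: le_trans hmj; rewrite ler_wpM2l.
Qed.

Lemma red_pair_upper_target {j j'' k r : 'I_n} :
  t r <= t k -> red_pair t p mu nu j k -> red_pair t p mu nu j'' r ->
  mj t p j <= mj t p j'' -> red_pair t p mu nu j'' k.
Proof.
move=> htrk [_ [_ [htk [_ hpk]]]] [_ [him'' [_ [hmr _]]]] hle.
apply: red_pair_of_window => //; first exact: le_trans hle.
exact: le_trans htrk.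
Qed.

End RedPairs.

Theorem mainTheorem7 (R : realFieldType) (n : nat) (t p : 'I_n -> R)
    (mu nu : R)
    (ht : forall i, 0 <= t i) (hp : forall i, 0 <= p i)
    (hgp : general_position t p)
    (hmu : 1 < mu) (hnu0 : 0 < nu) (hnu1 : nu < 1) (hmunu : 1 < mu * nu)
    (hmunu2 : 1 + mu^-1 <= nu + nu ^+ 2)
    (k r : 'I_n) (hkr : k <> r) (htrk : t r <= t k)
    (j : 'I_n) (hjk : red_pair t p mu nu j k) (hjr : red_pair t p mu nu j r) :
  (forall j' : 'I_n, red_pair t p mu nu j' k -> mj t p j' <= mj t p j ->
     red_pair t p mu nu j' r)
  /\
  ~ (exists j'' : 'I_n, red_pair t p mu nu j'' r /\
       forall j' : 'I_n, red_pair t p mu nu j' k -> mj t p j'' > mj t p j').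
Proof.
have [hmu0 hnu0'] : 0 <= mu /\ 0 <= nu by split; lra.
split.
- move=> j' hj'k hle.
  exact: (red_pair_lower_target ht hp hgp hmu0 hnu0' hmunu htrk hj'k hjr hle).
- case=> j'' [hj''r hall].
  have hj''k : red_pair t p mu nu j'' k.
    apply: (red_pair_upper_target ht hp hgp hmu0 hmunu htrk hjk hj''r).
    exact/ltW/hall.
  by have := hall j'' hj''k; rewrite ltxx.
Qed.
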